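(* Let $L:\mathbb{R}^n\to\mathbb{R}$ be $\mathcal{C}^1$, convex, with a unique minimizer $z_1^*$, $L^*=L(z_1^* )$. Let $\lambda>0$, $\gamma>0$, and let $\psi>0$ be such that $\nu:=\psi(\psi-\lambda)<0$. Define $$V(z):=\gamma(L(z_1)-L^* )+\tfrac12|\psi(z_1-z_1^* )+z_2|^2+\tfrac{\nu}{2}|z_1-z_1^*|^2,\quad z=(z_1,z_2)\in\mathbb{R}^{2n},$$ and let $\dot V(z):=\langle\nabla V(z),(z_2,-\lambda z_2-\gamma\nabla L(z_1))\rangle$. Then for each $z\in\mathbb{R}^{2n}$, $$\dot V(z)\le-\psi\big(a(z_1)+2\nu c(z_1)\big)+2(\psi-\lambda)b(z),$$ where $a(z_1):=\gamma(L(z_1)-L^* )$, $b(z):=\tfrac12|\psi(z_1-z_1^* )+z_2|^2$, $c(z_1):=\tfrac12|z_1-z_1^*|^2$.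
   Context: Convexity means $L(u)\ge L(w)+\langle\nabla L(w),u-w\rangle$ for all $u,w$. *)

From HB Require Import structures.
From mathcomp Require Import all_boot all_order all_algebra.
From mathcomp Require Import all_classical all_reals all_analysis.
Set Implicit Arguments. Unset Strict Implicit. Unset Printing Implicit Defensive.
Import Order.TTheory GRing.Theory Num.Theory.
Import numFieldNormedType.Exports.
Local Open Scope ring_scope.

Definition dotv {R : realType} {n : nat} (u v : 'rV[R]_n) : R := (u *m v^T) 0 0.

Definition sqnorm {R : realType} {n : nat} (u : 'rV[R]_n) : R := dotv u u.

Definition grad {R : realType} {n : nat} (f : 'rV[R]_n -> R) (z : 'rV[R]_n)
  : 'rV[R]_n := \row_i ('d f z (delta_mx 0 i : 'rV[R]_n)).

Definition C1 {R : realType} {n : nat} (f : 'rV[R]_n -> R) : Prop :=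
  (forall z, differentiable f z) /\ continuous (grad f).

Definition grad_convex {R : realType} {n : nat} (f : 'rV[R]_n -> R) : Prop :=
  forall u w, f w + dotv (grad f w) (u - w) <= f u.

Definition unique_minimizer {R : realType} {n : nat} (f : 'rV[R]_n -> R)
  (z1s : 'rV[R]_n) : Prop :=
  (forall x, f z1s <= f x) /\ (forall x, (forall y, f x <= f y) -> x = z1s).

(* The Lyapunov function V on R^{2n} = 'rV_(n+n), z = (z1, z2) = row_mx z1 z2 *)
Definition Vfun {R : realType} {n : nat} (L : 'rV[R]_n -> R) (z1s : 'rV[R]_n)
  (gamma psi nu : R) (z : 'rV[R]_(n + n)) : R :=
  gamma * (L (lsubmx z) - L z1s)
  + 2^-1 * sqnorm (psi *: (lsubmx z - z1s) + rsubmx z)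
  + nu / 2 * sqnorm (lsubmx z - z1s).

Definition field {R : realType} {n : nat} (L : 'rV[R]_n -> R) (lambda gamma : R)
  (z : 'rV[R]_(n + n)) : 'rV[R]_(n + n) :=
  row_mx (rsubmx z) (- (lambda *: rsubmx z) - gamma *: grad L (lsubmx z)).

Definition Vdot {R : realType} {n : nat} (L : 'rV[R]_n -> R) (z1s : 'rV[R]_n)
  (lambda gamma psi nu : R) (z : 'rV[R]_(n + n)) : R :=
  dotv (grad (Vfun L z1s gamma psi nu) z) (field L lambda gamma z).

(* Write w = z1 - z1* and v = psi w + z2.  Differentiating V along the vector
   field and substituting z2 = v - psi w, the mixed terms <v, w> cancel exactly
   because nu = psi (psi - lambda), which leaves the identity
     Vdot = - psi (gamma <grad L(z1), w> + nu |w|^2) + (psi - lambda) |v|^2.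
   Convexity of L between z1 and z1* gives L(z1) - L* <= <grad L(z1), w>, and
   psi > 0 turns this into the claimed bound. *)

From HB Require Import structures.
From mathcomp Require Import all_boot all_order all_algebra.
From mathcomp Require Import all_classical all_reals all_analysis.
From mathcomp Require Import ring lra.
Import Order.TTheory GRing.Theory Num.Theory.
Import numFieldNormedType.Exports.
Local Open Scope ring_scope.

Section InnerProduct.
Context {R : realType} {n : nat}.
Implicit Types u v w : 'rV[R]_n.

Lemma dotvE u v : dotv u v = \sum_j u 0 j * v 0 j.
Proof. by rewrite /dotv mxE; apply: eq_bigr => j _; rewrite mxE. Qed.

Lemma dotvC u v : dotv u v = dotv v u.
Proof. by rewrite !dotvE; apply: eq_bigr => j _; rewrite mulrC. Qed.

Lemma dotvDl u v w : dotv (u + v) w = dotv u w + dotv v w.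
Proof. by rewrite !dotvE -big_split; apply: eq_bigr => j _; rewrite mxE mulrDl. Qed.

Lemma dotvZl k u w : dotv (k *: u) w = k * dotv u w.
Proof. by rewrite !dotvE mulr_sumr; apply: eq_bigr => j _; rewrite mxE mulrA. Qed.

Lemma dotvNl u w : dotv (- u) w = - dotv u w.
Proof. by rewrite -scaleN1r dotvZl mulN1r. Qed.

Lemma dotvBl u v w : dotv (u - v) w = dotv u w - dotv v w.
Proof. by rewrite dotvDl dotvNl. Qed.

Lemma dotvDr u v w : dotv w (u + v) = dotv w u + dotv w v.
Proof. by rewrite ![dotv w _]dotvC dotvDl. Qed.

Lemma dotvZr k u w : dotv w (k *: u) = k * dotv w u.
Proof. by rewrite ![dotv w _]dotvC dotvZl. Qed.

Lemma dotvNr u w : dotv w (- u) = - dotv w u.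
Proof. by rewrite ![dotv w _]dotvC dotvNl. Qed.

Lemma dotvBr u v w : dotv w (u - v) = dotv w u - dotv w v.
Proof. by rewrite ![dotv w _]dotvC dotvBl. Qed.

Lemma dotv_gradE (f : 'rV[R]_n -> R) z h : dotv (grad f z) h = 'd f z h.
Proof.
rewrite dotvE {2}(row_sum_delta h) linear_sum; apply: eq_bigr => j _.
by rewrite linearZ mxE mulrC.
Qed.

Lemma grad_convex_gap (f : 'rV[R]_n -> R) x y :
  grad_convex f -> f x - f y <= dotv (grad f x) (x - y).
Proof. by move=> /(_ y x); rewrite -opprB dotvNr; lra. Qed.
End InnerProduct.

Section Differential.
Context {R : realType} {V : normedModType R}.

Lemma is_diff_sum {m} {f df : 'I_m -> V -> R} {x} :
  (forall i, is_diff x (f i) (df i)) ->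
  is_diff x (fun y => \sum_(i < m) f i y) (fun h => \sum_(i < m) df i h).
Proof.
move=> fdf; rewrite -!fct_sumE.
by elim/big_ind2: _ => [|? ? ? ? ? ?|//]; [exact: is_diff_cst|exact: is_diffD].
Qed.

Lemma is_diff_linear {U W : normedModType R} (f : {linear U -> W}) x :
  continuous f -> is_diff x f f.
Proof.
by move=> fc; apply: DiffDef; [exact: linear_differentiable|exact: diff_lin].
Qed.

Lemma is_diff_lsubmx {m n1 n2} (z : 'M[R]_(m, n1 + n2)) : is_diff z lsubmx lsubmx.
Proof. exact/is_diff_linear/continuous_lsubmx. Qed.

Lemma is_diff_rsubmx {m n1 n2} (z : 'M[R]_(m, n1 + n2)) : is_diff z rsubmx rsubmx.
Proof. exact/is_diff_linear/continuous_rsubmx. Qed.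

Lemma is_diff_coord {m k} {u du : V -> 'M[R]_(m, k)} i j {x} : is_diff x u du ->
  is_diff x (fun y => u y i j) (fun h => du h i j).
Proof.
have coord_linear : linear (fun N : 'M[R]_(m, k) => N i j) by move=> a N N'; rewrite !mxE.
pose coord : {linear 'M[R]_(m, k) -> R} :=
  HB.pack (fun N : 'M[R]_(m, k) => N i j) (GRing.isLinear.Build _ _ _ _ _ coord_linear).
move=> udu.
by have := is_diff_comp udu (is_diff_linear coord (u x) (@coord_continuous R m k i j)).
Qed.

Lemma is_diff_dotv {n} {u du v dv : V -> 'rV[R]_n} {x} :
  is_diff x u du -> is_diff x v dv ->
  is_diff x (fun y => dotv (u y) (v y)) (fun h => dotv (u x) (dv h) + dotv (du h) (v x)).
Proof.
move=> udu vdv.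
have uvj j : is_diff x (fun y => u y 0 j * v y 0 j)
    (fun h => u x 0 j * dv h 0 j + du h 0 j * v x 0 j).
  have := is_diffM (is_diff_coord 0 j udu) (is_diff_coord 0 j vdv).
  by move/is_diff_eq; apply; apply/funext => h; rewrite [du h 0 j * _]mulrC.
have -> : (fun y => dotv (u y) (v y)) = (fun y => \sum_j u y 0 j * v y 0 j).
  by apply/funext => y; rewrite dotvE.
apply: is_diff_eq (is_diff_sum uvj) _; apply/funext => h.
by rewrite !dotvE big_split.
Qed.

Lemma is_diff_sqnorm {n} {u du : V -> 'rV[R]_n} {x} : is_diff x u du ->
  is_diff x (fun y => sqnorm (u y)) (fun h => 2 * dotv (u x) (du h)).
Proof.
move=> udu; apply: is_diff_eq (is_diff_dotv udu udu) _.
by apply/funext => h; rewrite [dotv (du h) _]dotvC mulr_natl mulr2n.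
Qed.
End Differential.

Section Lyapunov.
Variables (R : realType) (n : nat) (L : 'rV[R]_n -> R) (z1s : 'rV[R]_n).

Lemma is_diff_Vfun gamma psi nu z : differentiable L (lsubmx z) ->
  is_diff z (Vfun L z1s gamma psi nu)
    (fun h => gamma * dotv (grad L (lsubmx z)) (lsubmx h)
      + dotv (psi *: (lsubmx z - z1s) + rsubmx z) (psi *: lsubmx h + rsubmx h)
      + nu * dotv (lsubmx z - z1s) (lsubmx h)).
Proof.
move=> dL.
have dw : is_diff z (fun y => lsubmx y - z1s) lsubmx.
  have := is_diffB (is_diff_lsubmx z) (is_diff_cst z1s z).
  by move/is_diff_eq; apply; apply/funext => h; rewrite /= subr0.
have dv : is_diff z (fun y => psi *: (lsubmx y - z1s) + rsubmx y)
    (fun h => psi *: lsubmx h + rsubmx h).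
  exact: is_diffD (is_diffZ psi dw) (is_diff_rsubmx z).
have dLz : is_diff z (fun y => gamma * (L (lsubmx y) - L z1s))
    (fun h => gamma * dotv (grad L (lsubmx z)) (lsubmx h)).
  have := is_diffZ gamma (is_diffB (is_diff_comp (is_diff_lsubmx z) (differentiableP dL))
    (is_diff_cst (L z1s) z)).
  by move/is_diff_eq; apply; apply/funext => h; rewrite /= dotv_gradE subr0.
have := is_diffD (is_diffD dLz (is_diffZ 2^-1 (is_diff_sqnorm dv)))
  (is_diffZ (nu / 2) (is_diff_sqnorm dw)).
move/is_diff_eq; apply; apply/funext => h /=.
rewrite !fctE /GRing.scale /=; lra.
Qed.

Lemma Vdot_closed_form lambda gamma psi z : differentiable L (lsubmx z) ->
  let w := lsubmx z - z1s in
  Vdot L z1s lambda gamma psi (psi * (psi - lambda)) z =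
    - psi * (gamma * dotv (grad L (lsubmx z)) w + psi * (psi - lambda) * sqnorm w)
    + (psi - lambda) * sqnorm (psi *: w + rsubmx z).
Proof.
move=> dL w; have dV := is_diff_Vfun gamma psi (psi * (psi - lambda)) z dL.
rewrite /Vdot dotv_gradE diff_val.
rewrite /field row_mxKl row_mxKr -/w /sqnorm; clearbody w.
set g := grad L (lsubmx z); set z2 := rsubmx z.
rewrite !(dotvDl, dotvDr, dotvZl, dotvZr, dotvNl, dotvNr, dotvBl, dotvBr).
rewrite [dotv z2 w]dotvC [dotv z2 g]dotvC [dotv w g]dotvC.
ring.
Qed.
End Lyapunov.

Theorem lemma5p2 (R : realType) (n : nat) (L : 'rV[R]_n -> R) (z1s : 'rV[R]_n)
  (lambda gamma psi : R) :
  C1 L -> grad_convex L -> unique_minimizer L z1s ->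
  0 < lambda -> 0 < gamma -> 0 < psi -> psi * (psi - lambda) < 0 ->
  forall z : 'rV[R]_(n + n),
    let nu := psi * (psi - lambda) in
    let a := gamma * (L (lsubmx z) - L z1s) in
    let b := 2^-1 * sqnorm (psi *: (lsubmx z - z1s) + rsubmx z) in
    let c := 2^-1 * sqnorm (lsubmx z - z1s) in
    Vdot L z1s lambda gamma psi nu z <= - psi * (a + 2 * nu * c) + 2 * (psi - lambda) * b.
Proof.
move=> [dL _] convL _ _ gamma_gt0 psi_gt0 _ z /=.
rewrite Vdot_closed_form //.
have gap : gamma * (L (lsubmx z) - L z1s)
    <= gamma * dotv (grad L (lsubmx z)) (lsubmx z - z1s).
  by rewrite ler_pM2l // grad_convex_gap.
have := ler_wpM2l (ltW psi_gt0) gap.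
lra.
Qed.
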